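(* Let $n$ be even and let $C$ be a Type IV code of length $n$. Let $\mathrm{IV}_n$ be the set of all Type IV codes of length $n$. Then: \[ \text{(i)}\quad \frac1{|\mathrm{IV}_n|}\sum_{D\in\mathrm{IV}_n}|C\cap D|=3-\frac{3}{2^{n-1}+1}; \] \[ \text{(ii)}\quad \frac1{|\mathrm{IV}_n|}\sum_{D\in\mathrm{IV}_n}|C\cap D|^2=\frac{27\,(2^{n})^2}{(2^{n}+2)(2^{n}+8)}. \]
   Context: A Type IV code of length $n$ ($n$ even) is a linear code $C\subseteq\mathbb F_4^n$ that is self-dual with respect to the Hermitian inner product $u\cdot v=\sum_i u_i\bar v_i$, where $\bar a=a^2$, and all of whose codewords have even Hamming weight. Such codes have dimension $n/2$ over $\mathbb F_4$. *)

From HB Require Import structures.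
From mathcomp Require Import all_boot all_order all_algebra all_field.
Set Implicit Arguments. Unset Strict Implicit. Unset Printing Implicit Defensive.
Import Order.TTheory GRing.Theory Num.Theory.
Local Open Scope ring_scope.

Section Codes.
Variables (F : finFieldType) (n : nat).

(* conjugation a |-> a^2 (the Frobenius of F_4 over F_2) *)
Definition conj4 (a : F) : F := a ^+ 2.

Definition herm (u v : 'rV[F]_n) : F := \sum_(i < n) u 0 i * conj4 (v 0 i).

Definition hwt (u : 'rV[F]_n) : nat := #|[set i : 'I_n | u 0 i != 0]|.

Definition is_linear_code (C : {set 'rV[F]_n}) : bool :=
  (0 \in C) && [forall u in C, forall v in C, forall a : F, a *: u + v \in C].

Definition herm_dual (C : {set 'rV[F]_n}) : {set 'rV[F]_n} :=
  [set v | [forall u in C, herm u v == 0]].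

Definition typeIV (C : {set 'rV[F]_n}) : bool :=
  [&& is_linear_code C, herm_dual C == C & [forall c in C, ~~ odd (hwt c)]].

Definition IV_codes : {set {set 'rV[F]_n}} := [set C | typeIV C].

End Codes.

From HB Require Import structures.
From mathcomp Require Import all_boot all_order all_algebra all_field all_fingroup.
From mathcomp Require Import zify ring.
Import Order.TTheory GRing.Theory Num.Theory.
Set Implicit Arguments. Unset Strict Implicit. Unset Printing Implicit Defensive.
Local Open Scope ring_scope.

(* The proof is a double counting argument driven by the isometry group of
   the Hermitian form.
   - Over F_4 the form is sesquilinear and nondegenerate, and herm u u is the
     weight of u mod 2, so Type IV means linear and Hermitian self-dual.
   - Rescalings, coordinate permutations and transvections along even
     indicator vectors are isometries; they act transitively on the nonzero
     isotropic vectors, which are thus all isometric to ones2 = (1,1,0,...,0).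
   - The Type IV codes of length 2 + k containing ones2 are the lifts
     {(a, a, z) | z in X} of the Type IV codes X of length k.
   Consequently every Type IV code of length n has 2^n words, every nonzero
   isotropic vector lies in |IV_k| codes (n = 2 + k), and counting isotropic
   vectors by characters gives (2^n + 2) |IV_k| = 2 |IV_n|.  Writing
   sum_D |C :&: D| = sum_(x in C) #codes through x yields the first moment;
   for the second moment the codes through a nonzero x in C reduce, via the
   lift, to the first moment in length k. *)

Lemma double_count (T : finType) (P : pred {set T}) (C : {set T})
    (f : {set T} -> nat) :
  (\sum_(D | P D) #|C :&: D| * f D = \sum_(x in C) \sum_(D | P D && (x \in D)) f D)%N.
Proof.
have e D : (#|C :&: D| * f D = \sum_(x in C) (x \in D) * f D)%N.
  rewrite -big_distrl /=; congr (_ * _)%N.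
  rewrite -sum1_card [RHS]big_mkcond [LHS]big_mkcond; apply: eq_bigr => x _.
  by rewrite inE; case: (x \in C); case: (x \in D).
rewrite (eq_bigr _ (fun D _ => e D)) exchange_big /=; apply: eq_bigr => x _.
by rewrite [RHS]big_mkcondr /=; apply: eq_bigr => D _; case: (x \in D); rewrite ?mul1n.
Qed.

Lemma sum_prod_rows (R : comNzSemiRingType) (T : finType) (n : nat) (phi : T -> R) :
  \sum_(x : 'rV[T]_n) \prod_(i < n) phi (x 0 i) = (\sum_a phi a) ^+ n.
Proof.
pose h (f : {ffun 'I_n -> T}) : 'rV[T]_n := \row_i f i.
have hb : bijective h.
  exists (fun v : 'rV[T]_n => [ffun i => v 0 i]).
    by move=> f; apply/ffunP => i; rewrite ffunE mxE.
  by move=> v; apply/rowP => i; rewrite mxE ffunE.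
rewrite (reindex h) /=; last exact: onW_bij.
rewrite (eq_bigr (fun f : {ffun 'I_n -> T} => \prod_(i < n) phi (f i))); last first.
  by move=> f _; apply: eq_bigr => i _; rewrite mxE.
by rewrite -(bigA_distr_bigA (fun (i : 'I_n) a => phi a)) /= prodr_const card_ord.
Qed.

Section Field4.
Variable F : finFieldType.
Hypothesis hF : #|F| = 4%N.

Lemma natr2_eq0 : (2%:R : F) = 0.
Proof.
have h2 : (2 \in [pchar F])%N by apply: (card_finPcharP (n:=2)) => //; rewrite hF.
exact: (pcharf0 h2).
Qed.

Lemma addrr (a : F) : a + a = 0.
Proof. by rewrite -mulr2n -mulr_natl natr2_eq0 mul0r. Qed.

Lemma addmx_self m p (A : 'M[F]_(m, p)) : A + A = 0.
Proof. by apply/matrixP => i j; rewrite !mxE addrr. Qed.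

Lemma oppr_id (a : F) : - a = a.
Proof. by apply/eqP; rewrite eq_sym -subr_eq0 opprK addrr. Qed.

Lemma natrF (m : nat) : (m%:R : F) = (odd m)%:R.
Proof.
by rewrite -{1}(odd_double_half m) natrD -mul2n natrM natr2_eq0 mul0r addr0.
Qed.

Lemma expr4_id (a : F) : a ^+ 4 = a.
Proof. by rewrite -{2}(expf_card a) hF. Qed.

Lemma expr3_nz (a : F) : a != 0 -> a ^+ 3 = 1.
Proof. by move=> a0; apply: (mulfI a0); rewrite -exprS expr4_id mulr1. Qed.

Lemma exists_primitive : exists2 w : F, w != 0 & w != 1.
Proof.
case: (pickP (fun w : F => (w != 0) && (w != 1))) => [w /andP[]|h]; first by exists w.
suff : (#|F| <= 2)%N by rewrite hF.
have sub : [set: F] \subset [set 0; 1].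
  apply/subsetP => a _; rewrite !inE; move: (h a) => /=.
  by case: eqP => //= _; case: eqP.
by rewrite -cardsT (leq_trans (subset_leq_card sub)) // cards2; case: (_ != _).
Qed.

Lemma conj4D (a b : F) : conj4 (a + b) = conj4 a + conj4 b.
Proof. by rewrite /conj4 sqrrD mulr2n addrr addr0. Qed.

Lemma conj4M (a b : F) : conj4 (a * b) = conj4 a * conj4 b.
Proof. by rewrite /conj4 exprMn. Qed.

Lemma conj4K (a : F) : conj4 (conj4 a) = a.
Proof. by rewrite /conj4 -exprM expr4_id. Qed.

Lemma conj4_0 : conj4 (0 : F) = 0.
Proof. by rewrite /conj4 expr0n. Qed.

Lemma conj4_1 : conj4 (1 : F) = 1.
Proof. by rewrite /conj4 expr1n. Qed.

Lemma conj4_sum (I : finType) (P : pred I) (f : I -> F) :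
  conj4 (\sum_(i | P i) f i) = \sum_(i | P i) conj4 (f i).
Proof. exact: (big_morph _ conj4D conj4_0). Qed.

Lemma norm4_nz (a : F) : a != 0 -> a * conj4 a = 1.
Proof. by move=> a0; rewrite /conj4 -exprS expr3_nz. Qed.

Variable n : nat.
Implicit Types (u v w : 'rV[F]_n) (D : {set 'rV[F]_n}).

Lemma hermDl u w v : herm (u + w) v = herm u v + herm w v.
Proof. by rewrite /herm -big_split; apply: eq_bigr => i _; rewrite mxE mulrDl. Qed.

Lemma hermZl a u v : herm (a *: u) v = a * herm u v.
Proof. by rewrite /herm mulr_sumr; apply: eq_bigr => i _; rewrite mxE mulrA. Qed.

Lemma hermDr u v w : herm u (v + w) = herm u v + herm u w.
Proof.
by rewrite /herm -big_split; apply: eq_bigr => i _; rewrite mxE conj4D mulrDr.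
Qed.

Lemma hermZr a u v : herm u (a *: v) = conj4 a * herm u v.
Proof.
rewrite /herm mulr_sumr; apply: eq_bigr => i _.
by rewrite mxE conj4M mulrCA.
Qed.

Lemma herm0l v : herm 0 v = 0.
Proof. by rewrite /herm big1 // => i _; rewrite mxE mul0r. Qed.

Lemma herm0r v : herm v 0 = 0.
Proof. by rewrite /herm big1 // => i _; rewrite mxE conj4_0 mulr0. Qed.

Lemma hermC u v : herm v u = conj4 (herm u v).
Proof.
by rewrite /herm conj4_sum; apply: eq_bigr => i _; rewrite conj4M conj4K mulrC.
Qed.

Definition evec (i : 'I_n) : 'rV[F]_n := \row_j (j == i)%:R.

Lemma herm_evec u i : herm u (evec i) = u 0 i.
Proof.
rewrite /herm (bigD1 i) //= big1 ?addr0; first by rewrite mxE eqxx conj4_1 mulr1.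
by move=> j ji; rewrite mxE (negbTE ji) conj4_0 mulr0.
Qed.

(* Nondegeneracy: pairing with the basis vectors recovers the coordinates. *)
Lemma herm_nondeg u : (forall v, herm u v = 0) -> u = 0.
Proof. by move=> h; apply/rowP => i; rewrite mxE -herm_evec. Qed.

(* herm u u counts the nonzero coordinates of u, so u is isotropic iff its
   weight is even; in particular the weight condition of Type IV is
   implied by self-duality. *)
Lemma herm_self u : herm u u = (hwt u)%:R.
Proof.
rewrite /herm /hwt -sum1_card natr_sum [RHS]big_mkcond /=.
apply: eq_bigr => i _; rewrite inE.
by case: eqP => [->|/eqP ne]; rewrite ?mul0r ?norm4_nz.
Qed.

Lemma isotropic_even u : (herm u u == 0) = ~~ odd (hwt u).
Proof. by rewrite herm_self natrF; case: (odd _); rewrite ?oner_eq0 ?eqxx. Qed.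

Lemma typeIV_selfdual D : typeIV D = is_linear_code D && (herm_dual D == D).
Proof.
rewrite /typeIV; case: (is_linear_code D) => //=.
case: (herm_dual D =P D) => [hd|//] /=; apply/forall_inP => c cD.
by rewrite -isotropic_even; move: (cD); rewrite -{1}hd inE => /forall_inP ->.
Qed.

Lemma typeIV_0 D : typeIV D -> 0 \in D.
Proof. by rewrite typeIV_selfdual => /andP[/andP[]]. Qed.

Lemma typeIV_isotropic D x : typeIV D -> x \in D -> herm x x = 0.
Proof.
rewrite typeIV_selfdual => /andP[_ /eqP Dd] xD; apply/eqP.
by move: (xD); rewrite -{1}Dd inE => /forall_inP ->.
Qed.

End Field4.

Arguments evec {F n} i.

Section Isometries.
Variable F : finFieldType.
Hypothesis hF : #|F| = 4%N.
Variable n : nat.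
Implicit Types (u v x y : 'rV[F]_n) (D : {set 'rV[F]_n}).

Record isometry (g : 'rV[F]_n -> 'rV[F]_n) : Prop := Isometry {
  iso_lin : forall a u v, g (a *: u + v) = a *: g u + g v;
  iso_herm : forall u v, herm (g u) (g v) = herm u v }.

Lemma iso0 g : isometry g -> g 0 = 0.
Proof.
case=> lin _; have := lin 1 0 0; rewrite !scale1r !addr0 => h.
by apply/(addrI (g 0)); rewrite addr0 -h.
Qed.

Lemma iso_inj g : isometry g -> injective g.
Proof.
move=> gi u v e; apply/eqP; rewrite -subr_eq0; apply/eqP; apply: herm_nondeg => w.
have g0 : g (u - v) = 0 by rewrite -scaleN1r addrC (iso_lin gi) e scaleN1r addNr.
by rewrite -(iso_herm gi) g0 herm0l.
Qed.

Lemma iso_comp g h : isometry g -> isometry h -> isometry (g \o h).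
Proof.
move=> [lg hg] [lh hh]; split => [a u v|u v] /=; first by rewrite lh lg.
by rewrite hg hh.
Qed.

Lemma iso_inv g (gi : isometry g) : isometry (invF (iso_inj gi)).
Proof.
split => [a u v|u v]; last by rewrite -(iso_herm gi) !f_invF.
by apply: (iso_inj gi); rewrite (iso_lin gi) !f_invF.
Qed.

Lemma typeIV_iso g D : isometry g -> typeIV D -> typeIV (g @: D).
Proof.
move=> gi; rewrite !(typeIV_selfdual hF) => /andP[/andP[D0 /forall_inP Dl] /eqP Dd].
apply/andP; split.
  apply/andP; split; first by rewrite -(iso0 gi) imset_f.
  apply/forall_inP => _ /imsetP[u uD ->]; apply/forall_inP => _ /imsetP[v vD ->].
  apply/forallP => a; rewrite -(iso_lin gi) imset_f //.
  by move: (Dl u uD) => /forall_inP /(_ v vD) /forallP.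
apply/eqP/setP => y; have [w ->] : exists w, y = g w.
  by exists (invF (iso_inj gi) y); rewrite f_invF.
rewrite (mem_imset _ _ (iso_inj gi)) -{2}Dd !inE.
apply/forall_inP/forall_inP => [h x xD|h _ /imsetP[u uD ->]].
  by rewrite -(iso_herm gi) h ?imset_f.
by rewrite (iso_herm gi) h.
Qed.

Lemma typeIV_isoE g D (gi : isometry g) : typeIV (g @: D) = typeIV D.
Proof.
apply/idP/idP; last exact: typeIV_iso.
move=> /(typeIV_iso (iso_inv gi)); rewrite -imset_comp.
by rewrite (eq_imset _ (invF_f (iso_inj gi))) imset_id.
Qed.

Definition isometric x y := exists2 g, isometry g & g x = y.

Lemma isometric_trans y x z : isometric x y -> isometric y z -> isometric x z.
Proof.
move=> [g gi gx] [h hi hy]; exists (h \o g); first exact: iso_comp.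
by rewrite /= gx.
Qed.

(* Three families of isometries: rescaling each coordinate by a nonzero
   scalar, permuting coordinates, and the transvection v |-> v + <v, 1_S> 1_S
   along the indicator of an even set S (which is isotropic). *)
Definition scale_map (l : 'I_n -> F) v : 'rV[F]_n := \row_i (l i * v 0 i).

Definition perm_map (p : {perm 'I_n}) v : 'rV[F]_n := \row_i v 0 (p i).

Definition ind (S : {set 'I_n}) : 'rV[F]_n := \row_i (i \in S)%:R.

Definition shift_map (S : {set 'I_n}) v : 'rV[F]_n := v + herm v (ind S) *: ind S.

Lemma scale_iso l : (forall i, l i != 0) -> isometry (scale_map l).
Proof.
move=> l0; split => [a u v|u v]; first by apply/rowP => i; rewrite !mxE mulrDr mulrCA.
rewrite /herm; apply: eq_bigr => i _.
by rewrite !mxE conj4M mulrACA norm4_nz // mul1r.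
Qed.

Lemma perm_iso p : isometry (perm_map p).
Proof.
split => [a u v|u v]; first by apply/rowP => i; rewrite !mxE.
rewrite /herm (reindex_inj (@perm_inj _ p^-1)) /=.
by apply: eq_bigr => i _; rewrite !mxE permKV.
Qed.

Lemma herm_ind (S : {set 'I_n}) : herm (ind S) (ind S) = (#|S|)%:R.
Proof.
rewrite herm_self //; congr (_%:R); apply: eq_card => i.
by rewrite !inE mxE; case: (i \in S); rewrite ?oner_eq0 ?eqxx.
Qed.

Lemma shift_iso (S : {set 'I_n}) : ~~ odd #|S| -> isometry (shift_map S).
Proof.
move=> Se; split => [a u v|u v].
  by rewrite /shift_map hermDl hermZl scalerDl -scalerA scalerDr addrACA.
have hII : herm (ind S) (ind S) = 0 by rewrite herm_ind natrF // (negbTE Se).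
rewrite /shift_map !hermDl !(hermDr hF) !hermZl !hermZr hII !mulr0 addr0.
by rewrite (hermC hF v (ind S)) [_ * conj4 _]mulrC -addrA addrr // addr0.
Qed.

Lemma isometric_support x y :
  (forall i, (x 0 i == 0) = (y 0 i == 0)) -> isometric x y.
Proof.
move=> supp; pose l i := if x 0 i == 0 then 1 else y 0 i / x 0 i.
exists (scale_map l).
  apply: scale_iso => i; rewrite /l; case: (x 0 i =P 0) => [_|/eqP x0]; first exact: oner_neq0.
  by rewrite mulf_neq0 ?invr_eq0 // -supp.
apply/rowP => i; rewrite !mxE /l; case: (x 0 i =P 0) => [x0|/eqP x0]; last by rewrite mulfVK.
by rewrite x0 mulr0; apply/esym/eqP; rewrite -supp x0.
Qed.

Lemma isometric_shift (S : {set 'I_n}) x :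
  ~~ odd #|S| -> isometric x (shift_map S x).
Proof. by move=> Se; exists (shift_map S) => //; apply: shift_iso. Qed.

Lemma perm_map_evec (p : {perm 'I_n}) c : perm_map p (evec c) = evec ((p^-1)%g c).
Proof. by apply/rowP => j; rewrite !mxE (canF_eq (permK p)). Qed.

Lemma isometric_tperm (a b c d : 'I_n) :
  isometric (evec a + evec b) (evec (tperm c d a) + evec (tperm c d b)).
Proof.
exists (perm_map (tperm c d)); first exact: perm_iso.
by rewrite -[evec a]scale1r (iso_lin (perm_iso _)) scale1r !perm_map_evec tpermV.
Qed.

End Isometries.

Arguments ind {F n} S.

Section Transitivity.
Variable F : finFieldType.
Hypothesis hF : #|F| = 4%N.
Variable n : nat.
Implicit Types (x : 'rV[F]_n).

Lemma evec2E (a b : F) (i0 j0 i : 'I_n) :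
  (a *: evec i0 + b *: evec j0) 0 i = a * (i == i0)%:R + b * (i == j0)%:R.
Proof. by rewrite !mxE. Qed.

Lemma isometric_scaled_pair (a b : F) (i0 j0 : 'I_n) : i0 != j0 -> a != 0 -> b != 0 ->
  isometric (a *: evec i0 + b *: evec j0) (evec i0 + evec j0).
Proof.
move=> ne a0 b0; apply: (isometric_support hF) => i; rewrite evec2E !mxE.
have [->|ii0] := eqVneq i i0.
  by rewrite (negbTE ne) /= mulr1n mulr0n mulr1 mulr0 !addr0 (negbTE a0) oner_eq0.
rewrite /= mulr0n mulr0 !add0r; case: (i == j0) => /=.
  by rewrite mulr1n mulr1 (negbTE b0) oner_eq0.
by rewrite mulr0n mulr0 eqxx.
Qed.

(* A nonzero isotropic vector has at least two nonzero coordinates, because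
   its weight is even. *)
Lemma isotropic_support x : x != 0 -> herm x x = 0 ->
  exists i0 j0, [/\ i0 != j0, x 0 i0 != 0 & x 0 j0 != 0].
Proof.
move=> x0 xx; set S := [set i | x 0 i != 0].
have Se : ~~ odd #|S| by rewrite -[#|S|]/(hwt x) -isotropic_even // xx.
have S0 : (0 < #|S|)%N.
  rewrite card_gt0; apply: contraNneq x0 => S0; apply/eqP/rowP => i.
  by move/setP/(_ i): S0; rewrite !inE mxE => /negbFE/eqP.
have /card_gt1P[i0 [j0 [i0S j0S ne]]] : (1 < #|S|)%N.
  by move: Se S0; case: #|S| => [|[]].
by exists i0, j0; move: i0S j0S; rewrite !inE.
Qed.

(* Every nonzero isotropic vector is isometric to some e_i0 + e_j0: rescale it
   to 1_S + (w+1) e_i0 + w e_j0 on its support S, whose form with 1_S is 1,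
   so the transvection along 1_S turns it into (w+1) e_i0 + w e_j0. *)
Lemma isometric_pair x : x != 0 -> herm x x = 0 ->
  exists i0 j0, i0 != j0 /\ isometric x (evec i0 + evec j0).
Proof.
move=> x0 xx; have [i0 [j0 [ne xi0 xj0]]] := isotropic_support x0 xx.
exists i0, j0; split => //.
have [w w0 w1] := exists_primitive hF.
have w10 : w + 1 != 0 by rewrite addr_eq0 oppr_id.
set S := [set i | x 0 i != 0].
pose u := ind S + ((w + 1) *: evec i0 + w *: evec j0).
have uE i : u 0 i = (x 0 i != 0)%:R + ((w + 1) * (i == i0)%:R + w * (i == j0)%:R).
  by rewrite mxE evec2E mxE inE.
have xu : isometric x u.
  apply: (isometric_support hF) => i; rewrite uE.
  have [->|ii0] := eqVneq i i0.
    rewrite (negbTE xi0) (negbTE ne) /= !mulr1n mulr0n mulr1 mulr0 addr0.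
    by rewrite addrCA addrr // addr0 (negbTE w0).
  have [->|ij0] := eqVneq i j0.
    rewrite (negbTE xj0) /= !mulr1n mulr0n mulr1 mulr0 add0r.
    by rewrite addrC (negbTE w10).
  rewrite /= mulr0n !mulr0 !addr0.
  by case: (x 0 i == 0); rewrite /= ?mulr0n ?mulr1n ?eqxx ?oner_eq0.
have Se : ~~ odd #|S| by rewrite -[#|S|]/(hwt x) -isotropic_even // xx.
have herm_evec_ind i : i \in S -> herm (evec i) (ind S) = 1 :> F.
  by move=> iS; rewrite (hermC hF) herm_evec mxE iS conj4_1.
have uS : herm u (ind S) = 1.
  rewrite !hermDl !hermZl !herm_evec_ind ?inE // herm_ind // natrF // (negbTE Se).
  by rewrite add0r !mulr1 addrAC addrr // add0r.
have u_shift : shift_map S u = (w + 1) *: evec i0 + w *: evec j0.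
  by rewrite /shift_map uS scale1r /u addrAC addmx_self // add0r.
apply: (isometric_trans xu); apply: (isometric_trans (isometric_shift hF u Se)).
by rewrite u_shift; apply: isometric_scaled_pair.
Qed.

(* The isometry group acts transitively on nonzero isotropic vectors: each
   of them is isometric to any fixed e_z + e_o (move i0 to z, then j0 to o). *)
Lemma isotropic_transitive (z o : 'I_n) x : z != o -> x != 0 -> herm x x = 0 ->
  isometric x (evec z + evec o).
Proof.
move=> zo x0 xx; have [i0 [j0 [ne xp]]] := isometric_pair x0 xx.
apply: (isometric_trans xp); set j1 := tperm z i0 j0.
have j1z : j1 != z.
  by rewrite -[z in _ != z](tpermR z i0) (inj_eq (@perm_inj _ _)) eq_sym.
apply: (isometric_trans (isometric_tperm F i0 j0 z i0)); rewrite tpermR -/j1.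
by have := isometric_tperm F z j1 o j1; rewrite tpermR tpermD // eq_sym.
Qed.

End Transitivity.

Section Reduction.
Variable F : finFieldType.
Hypothesis hF : #|F| = 4%N.
Variable k : nat.

Local Notation V := 'rV[F]_(2 + k).
Implicit Types (u v : V) (X Y : {set 'rV[F]_k}).

Definition ones2 : V := row_mx (const_mx 1) 0.

(* The code {(a, a, z) | a in F, z in X} of length 2 + k built from a code X
   of length k; the Type IV codes containing ones2 are exactly these. *)
Definition lift_code X : {set V} :=
  [set v | (lsubmx v 0 ord0 == lsubmx v 0 ord_max) && (rsubmx v \in X)].

Lemma ord2_cases (j : 'I_2) : j = ord0 \/ j = ord_max.
Proof. by case: j => [[|[|//]]] Hj; [left|right]; apply: val_inj. Qed.

Lemma addr_eq0F (a b : F) : (a + b == 0) = (a == b).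
Proof. by rewrite addr_eq0 oppr_id. Qed.

Lemma herm2 (a b : 'rV[F]_2) :
  herm a b = a 0 ord0 * conj4 (b 0 ord0) + a 0 ord_max * conj4 (b 0 ord_max).
Proof.
rewrite /herm big_ord_recl big_ord_recl big_ord0 addr0.
by have -> : lift ord0 (ord0 : 'I_1) = ord_max by apply: val_inj.
Qed.

Lemma herm_split u v :
  herm u v = herm (lsubmx u) (lsubmx v) + herm (rsubmx u) (rsubmx v).
Proof.
rewrite /herm big_split_ord /=.
by congr (_ + _); apply: eq_bigr => i _; rewrite !mxE.
Qed.

Lemma rsubmx_lin a u v : rsubmx (a *: u + v) = a *: rsubmx u + rsubmx v.
Proof. by apply/rowP => i; rewrite !mxE. Qed.

Lemma lsubmx_lin a u v : lsubmx (a *: u + v) = a *: lsubmx u + lsubmx v.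
Proof. by apply/rowP => i; rewrite !mxE. Qed.

Lemma ones2_decomp v : lsubmx v 0 ord0 = lsubmx v 0 ord_max ->
  v = lsubmx v 0 ord0 *: ones2 + row_mx 0 (rsubmx v).
Proof.
move=> h; rewrite /ones2 scale_row_mx add_row_mx scaler0 add0r addr0.
rewrite -{1}(hsubmxK v); congr (row_mx _ _); apply/rowP => j; rewrite !mxE mulr1.
by move: h; rewrite !mxE => h; case: (ord2_cases j) => ->.
Qed.

Lemma herm_ones2r v : herm v ones2 = lsubmx v 0 ord0 + lsubmx v 0 ord_max.
Proof.
by rewrite herm_split /ones2 row_mxKl row_mxKr herm0r addr0 herm2 !mxE conj4_1 !mulr1.
Qed.

Lemma herm_row0r u z : herm u (row_mx 0 z) = herm (rsubmx u) z.
Proof. by rewrite herm_split row_mxKl row_mxKr herm0r add0r. Qed.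

Lemma herm_row0l u z : herm (row_mx 0 z) u = herm z (rsubmx u).
Proof. by rewrite herm_split row_mxKl row_mxKr herm0l add0r. Qed.

Lemma ones2_lift X : 0 \in X -> ones2 \in lift_code X.
Proof. by move=> X0; rewrite inE /ones2 row_mxKl row_mxKr X0 !mxE eqxx. Qed.

Lemma row0_lift X z : (row_mx 0 z \in lift_code X) = (z \in X).
Proof. by rewrite inE row_mxKl row_mxKr !mxE eqxx. Qed.

(* A Type IV code containing ones2 is the lift of its restriction to the last
   k coordinates: ones2 lies in its dual, so its vectors are (a, a, z). *)
Lemma lift_restrict (D : {set V}) : typeIV D -> ones2 \in D ->
  D = lift_code (rsubmx @: D).
Proof.
rewrite (typeIV_selfdual hF) => /andP[/andP[D0 /forall_inP Dl] /eqP Dd] oD.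
have sub : D \subset lift_code (rsubmx @: D).
  apply/subsetP => v vD; rewrite inE imset_f // andbT -addr_eq0F -herm_ones2r.
  by move: oD; rewrite -Dd inE => /forall_inP ->.
apply/eqP; rewrite eqEsubset sub /=; apply/subsetP => v.
rewrite inE => /andP[/eqP hv /imsetP[u uD ru]].
have /(subsetP sub) : u \in D by [].
rewrite inE => /andP[/eqP hu _].
have -> : v = (lsubmx v 0 ord0 - lsubmx u 0 ord0) *: ones2 + u.
  by rewrite {2}(ones2_decomp hu) addrA -scalerDl subrK -ru; apply: ones2_decomp.
by move: (Dl ones2 oD) => /forall_inP /(_ u uD) /forallP.
Qed.

Lemma typeIV_restrict (D : {set V}) : typeIV D -> ones2 \in D ->
  typeIV (rsubmx @: D).
Proof.
move=> DIV oD; have DL := lift_restrict DIV oD.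
move: DIV; rewrite !(typeIV_selfdual hF) => /andP[/andP[D0 /forall_inP Dl] /eqP Dd].
apply/andP; split.
  apply/andP; split; first by apply/imsetP; exists 0 => //; apply/rowP => i; rewrite !mxE.
  apply/forall_inP => _ /imsetP[u uD ->]; apply/forall_inP => _ /imsetP[v vD ->].
  apply/forallP => a; rewrite -rsubmx_lin imset_f //.
  by move: (Dl u uD) => /forall_inP /(_ v vD) /forallP.
apply/eqP/setP => z.
have -> : (z \in herm_dual (rsubmx @: D)) = (row_mx 0 z \in herm_dual D).
  rewrite !inE; apply/forall_inP/forall_inP => [h u uD|h _ /imsetP[v vD ->]].
    by rewrite herm_row0r h ?imset_f.
  by rewrite -herm_row0r h.
rewrite Dd; apply/idP/idP => [h|]; first by apply/imsetP; exists (row_mx 0 z); rewrite ?row_mxKr.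
by rewrite {2}DL row0_lift.
Qed.

Lemma typeIV_lift X : typeIV X -> typeIV (lift_code X).
Proof.
rewrite !(typeIV_selfdual hF) => /andP[/andP[X0 /forall_inP Xl] /eqP Xd].
apply/andP; split.
  apply/andP; split.
    rewrite inE !mxE eqxx /=.
    by have -> : rsubmx (0 : V) = 0 by apply/rowP => i; rewrite !mxE.
  apply/forall_inP => u; rewrite inE => /andP[/eqP hu ru].
  apply/forall_inP => v; rewrite inE => /andP[/eqP hv rv].
  apply/forallP => a; rewrite inE lsubmx_lin rsubmx_lin.
  move: hu hv; rewrite !mxE => -> ->; rewrite eqxx /=.
  by move: (Xl _ ru) => /forall_inP /(_ _ rv) /forallP.
apply/eqP/setP => v; apply/idP/idP => [vd|].
  move: (vd); rewrite inE => /forall_inP hv.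
  have := hv ones2 (ones2_lift X0); rewrite (hermC hF) herm_ones2r => /eqP h.
  rewrite inE; apply/andP; split.
    by rewrite -addr_eq0F -[_ + _](conj4K hF) h conj4_0.
  rewrite -Xd inE; apply/forall_inP => z zX.
  by rewrite -herm_row0l hv ?row0_lift.
rewrite inE => /andP[/eqP hv rv]; rewrite inE; apply/forall_inP => u.
rewrite inE => /andP[/eqP hu ru].
rewrite herm_split herm2 hu hv addrr // add0r.
by move: rv; rewrite -Xd inE => /forall_inP ->.
Qed.

Lemma lift_codeK X : rsubmx @: lift_code X = X.
Proof.
apply/setP => z; apply/imsetP/idP => [[v vX ->]|zX].
  by move: vX; rewrite inE => /andP[].
by exists (row_mx 0 z); rewrite ?row0_lift ?row_mxKr.
Qed.

Lemma lift_code_inj : injective lift_code.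
Proof. by move=> X Y e; rewrite -(lift_codeK X) -(lift_codeK Y) e. Qed.

Lemma card_lift_code X : #|lift_code X| = (4 * #|X|)%N.
Proof.
pose h (p : F * 'rV[F]_k) : V := row_mx (p.1 *: const_mx 1) p.2.
have hinj : injective h.
  move=> [a z] [b w]; rewrite /h /= => /eq_row_mx[eab ->]; congr (_, _).
  by move/rowP: eab => /(_ ord0); rewrite !mxE !mulr1.
have -> : lift_code X = h @: setX [set: F] X.
  apply/setP => v; apply/idP/imsetP => [|[[a z]]].
    rewrite inE => /andP[/eqP hv rv]; exists (lsubmx v 0 ord0, rsubmx v).
      by rewrite inE /= in_setT rv.
    rewrite /h /= -{1}(hsubmxK v); congr (row_mx _ _); apply/rowP => j.
    rewrite !mxE mulr1; move: hv; rewrite !mxE => hv.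
    by case: (ord2_cases j) => ->.
  by rewrite inE /= => /andP[_ zX] ->; rewrite inE /h row_mxKl row_mxKr zX !mxE eqxx.
by rewrite card_imset // cardsX cardsT hF.
Qed.

Lemma lift_codeI X Y : lift_code X :&: lift_code Y = lift_code (X :&: Y).
Proof. by apply/setP => v; rewrite !inE; case: (_ == _); case: (_ \in X). Qed.

Lemma sum_codes_through_ones2 (R : nmodType) (f : {set V} -> R) :
  \sum_(D | typeIV D && (ones2 \in D)) f D = \sum_(X | typeIV X) f (lift_code X).
Proof.
rewrite [RHS](eq_bigl (fun X => X \in [set X | typeIV X])); last by move=> X; rewrite inE.
rewrite -(big_imset _ (in2W lift_code_inj)) /=.
apply: eq_bigl => D; apply/andP/imsetP => [[DIV oD]|[X]].
  exists (rsubmx @: D); last exact: lift_restrict.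
  by rewrite inE; apply: typeIV_restrict.
rewrite inE => XIV ->; split; first exact: typeIV_lift.
exact/ones2_lift/(typeIV_0 hF).
Qed.

(* ones2 is e_z + e_o for the first two coordinates z, o, so every nonzero
   isotropic vector of length 2 + k is isometric to it. *)
Lemma isometric_ones2 (x : V) : x != 0 -> herm x x = 0 -> isometric x ones2.
Proof.
move=> x0 xx; have zo : lshift k (ord0 : 'I_2) != lshift k ord_max by rewrite eq_lshift.
suff <- : evec (lshift k (ord0 : 'I_2)) + evec (lshift k ord_max) = ones2.
  exact: isotropic_transitive.
rewrite -[LHS]hsubmxK /ones2; congr (row_mx _ _); apply/rowP => j; rewrite !mxE.
  by rewrite -!val_eqE /=; case: (ord2_cases j) => -> /=; rewrite ?addr0 ?add0r.
by rewrite -!val_eqE /= addr0.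
Qed.

Lemma ones2_neq0 : ones2 != 0.
Proof.
apply/eqP => /rowP /(_ (lshift k ord0)); rewrite /ones2 row_mxEl !mxE.
by move/eqP; rewrite oner_eq0.
Qed.

End Reduction.

Section Counting.
Variable F : finFieldType.
Hypothesis hF : #|F| = 4%N.

Definition ncodes_through n (x : 'rV[F]_n) : nat := \sum_(D | typeIV D && (x \in D)) 1%N.

Lemma sum_IV n (f : {set 'rV[F]_n} -> nat) :
  \sum_(D in IV_codes F n) f D = \sum_(D | typeIV D) f D.
Proof. by apply: eq_bigl => D; rewrite inE. Qed.

Lemma card_IV n : #|IV_codes F n| = \sum_(D : {set 'rV[F]_n} | typeIV D) 1%N.
Proof. by rewrite -sum_IV sum1_card. Qed.

Lemma ncodes_through0 n : ncodes_through (0 : 'rV[F]_n) = #|IV_codes F n|.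
Proof.
rewrite card_IV /ncodes_through; apply: eq_bigl => D.
by case: (boolP (typeIV D)) => //= /(typeIV_0 hF).
Qed.

Lemma sum_codes_through_iso n g (x : 'rV[F]_n) (R : nmodType) (f : {set 'rV[F]_n} -> R) :
  isometry g ->
  \sum_(D | typeIV D && (g x \in D)) f D = \sum_(D | typeIV D && (x \in D)) f (g @: D).
Proof.
move=> gi; rewrite (reindex_inj (imset_inj (iso_inj gi))) /=.
by apply: eq_bigl => D; rewrite (typeIV_isoE hF _ gi) (mem_imset _ _ (iso_inj gi)).
Qed.

(* In length 2 + k, every nonzero isotropic vector lies in as many Type IV
   codes as ones2, namely one for each Type IV code of length k. *)
Lemma ncodes_through_isotropic k (x : 'rV[F]_(2 + k)) : x != 0 -> herm x x = 0 ->
  ncodes_through x = #|IV_codes F k|.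
Proof.
move=> x0 xx; have [g gi gx] := isometric_ones2 hF x0 xx.
rewrite /ncodes_through -(sum_codes_through_iso _ (fun _ => 1%N) gi) gx.
by rewrite (sum_codes_through_ones2 hF (fun _ => 1%N)) card_IV.
Qed.

Lemma move_to_ones2 k (D : {set 'rV[F]_(2 + k)}) x : typeIV D -> x \in D -> x != 0 ->
  exists2 g, isometry g & [/\ g x = ones2 F k, typeIV (g @: D) & ones2 F k \in g @: D].
Proof.
move=> DIV xD x0; have [g gi gx] := isometric_ones2 hF x0 (typeIV_isotropic hF DIV xD).
by exists g => //; split => //; [apply: typeIV_iso | rewrite -gx imset_f].
Qed.

(* A Type IV code of positive length is not {0}, whose dual is everything. *)
Lemma typeIV_has_nonzero n (D : {set 'rV[F]_n}) (x1 : 'rV[F]_n) :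
  typeIV D -> x1 != 0 -> exists2 x, x \in D & x != 0.
Proof.
move=> DIV x10; case: (boolP [exists x in D, x != 0]) => [/exists_inP[x]|/exists_inPn h].
  by exists x.
have : x1 \in D.
  move: DIV; rewrite (typeIV_selfdual hF) => /andP[_ /eqP <-]; rewrite inE.
  by apply/forall_inP => u /h; rewrite negbK => /eqP ->; rewrite herm0l.
by move/h; rewrite x10.
Qed.

(* A Type IV code of even length n has 2^n codewords: move a nonzero codeword
   to ones2 and use |lift_code X| = 4 |X|. *)
Lemma card_typeIV n : ~~ odd n ->
  forall D : {set 'rV[F]_n}, typeIV D -> #|D| = (2 ^ n)%N.
Proof.
move=> hn; have [m ->] : exists m, n = m.*2.
  by exists n./2; rewrite -{1}(odd_double_half n) (negbTE hn).
elim: m => [|m IH] D DIV.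
  apply/eqP; rewrite eqn_leq (leq_trans (max_card _)) ?card_mx //=.
  by rewrite card_gt0; apply/set0Pn; exists 0; apply: (typeIV_0 hF).
have [x xD x0] := typeIV_has_nonzero DIV (ones2_neq0 F (m.*2)).
have [g gi [_ gDIV ogD]] := move_to_ones2 DIV xD x0.
rewrite -(card_imset D (iso_inj gi)) (lift_restrict hF gDIV ogD) (card_lift_code hF).
by rewrite (IH _ (typeIV_restrict hF gDIV ogD)) doubleS !expnS mulnA.
Qed.

Lemma card_typeIV_nonzero n (D : {set 'rV[F]_n}) : ~~ odd n -> typeIV D ->
  #|D :\ 0| = (2 ^ n).-1.
Proof.
by move=> hn DIV; rewrite -(card_typeIV hn DIV) (cardsD1 0 D) (typeIV_0 hF DIV).
Qed.


(* Counting isotropic vectors through characters: 2 [x isotropic] equals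
   1 + (-1)^wt(x), and the sign is a product over the coordinates. *)
Lemma isotropic_sign n (x : 'rV[F]_n) :
  2 * (herm x x == 0%R)%:R = 1 + \prod_(i < n) (if x 0 i == 0 then 1 else -1) :> rat.
Proof.
have -> : \prod_(i < n) (if x 0 i == 0 then 1 else -1) = (-1) ^+ hwt x :> rat.
  rewrite /hwt -prodr_const [RHS]big_mkcond /=; apply: eq_bigr => i _.
  by rewrite inE; case: (x 0 i == 0).
rewrite (isotropic_even hF) -signr_odd.
by case: (odd _); rewrite /= ?mulr0 ?expr1 ?addrN ?mulr1 ?expr0.
Qed.

Lemma sum_sign : \sum_(a : F) (if a == 0 then 1 else -1) = - 2 :> rat.
Proof.
rewrite (bigD1 0) //= eqxx (eq_bigr (fun _ => -1)); last by move=> a /negbTE ->.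
by rewrite sumr_const cardC1 hF; apply/eqP.
Qed.

Lemma card_isotropic n : ~~ odd n ->
  (2 * #|[set x : 'rV[F]_n | herm x x == 0%R]| = 4 ^ n + 2 ^ n)%N.
Proof.
move=> hn; apply/eqP; rewrite -(eqr_nat rat) natrM natrD !natrX; apply/eqP.
rewrite -sum1_card natr_sum mulr_sumr big_mkcond /=.
rewrite (eq_bigr (fun x : 'rV[F]_n => 1 + \prod_(i < n) (if x 0 i == 0 then 1 else -1)));
  last by move=> x _; rewrite inE -isotropic_sign; case: (herm x x == 0); rewrite ?mulr0.
rewrite big_split /= (sum_prod_rows n (fun a : F => if a == 0 then 1 else -1 : rat)).
by rewrite sum_sign sumr_const card_mx mul1n hF exprNn -signr_odd (negbTE hn) mul1r natrX.
Qed.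

(* Double counting the incidences between nonzero isotropic vectors of length
   2 + k and the Type IV codes containing them. *)
Lemma count_isotropic_incidences k : ~~ odd k ->
  (#|IV_codes F (2 + k)| * (2 ^ (2 + k)).-1 =
   #|[set x : 'rV[F]_(2 + k) | herm x x == 0%R] :\ 0%R| * #|IV_codes F k|)%N.
Proof.
move=> hk; have hn : ~~ odd (2 + k) by rewrite oddD.
set Iso1 := _ :\ 0%R.
have -> : (#|IV_codes F (2 + k)| * (2 ^ (2 + k)).-1 =
           \sum_(D | typeIV D) #|Iso1 :&: D| * 1)%N.
  rewrite card_IV big_distrl /=; apply: eq_bigr => D DIV.
  rewrite muln1 mul1n -(card_typeIV_nonzero hn DIV); apply: eq_card => x.
  rewrite !inE; case: (x == 0) => //=; case xD: (x \in D); rewrite ?andbF //.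
  by rewrite (typeIV_isotropic hF DIV xD) eqxx.
rewrite double_count -sum_nat_const; apply: eq_bigr => x; rewrite !inE => /andP[x0 xx].
exact: (ncodes_through_isotropic x0 (eqP xx)).
Qed.

Lemma card_IV_rec k : ~~ odd k ->
  ((2 ^ (2 + k) + 2) * #|IV_codes F k| = 2 * #|IV_codes F (2 + k)|)%N.
Proof.
move=> hk; have hn : ~~ odd (2 + k) by rewrite oddD.
have inc := count_isotropic_incidences hk; have iso := card_isotropic hn.
rewrite (cardsD1 0) inE herm0l eqxx add1n -[4%N]/(2 * 2)%N expnMn in iso.
have t4 : (4 <= 2 ^ (2 + k))%N by rewrite expnD (leq_pmulr 4) ?expn_gt0.
move: inc iso t4; rewrite -subn1; set t := (2 ^ (2 + k))%N.
set c := #|_ :\ _|; set a := #|IV_codes F k|; set b := #|IV_codes F (2 + k)|.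
move=> inc iso t4; apply/eqP; rewrite -(@eqn_pmul2l (t - 1)); last lia.
apply/eqP; nia.
Qed.

End Counting.

(* The arithmetic combining the first moment, the recursion for |IV_n| and
   the codes through nonzero codewords into the second moment. *)
Lemma second_moment_arith (s a b A T : nat) : (0 < s)%N ->
  ((4 * s + 2) * a = 2 * b)%N ->
  ((4 * s + 2) * A = 3 * (4 * s) * b)%N ->
  ((s + 2) * T = (4 * s - 1) * (12 * s * a))%N ->
  ((4 * s + 2) * (4 * s + 8) * (A + T) = 27 * (4 * s) ^ 2 * b)%N.
Proof.
case: s => // u _; rewrite (_ : 4 * u.+1 - 1 = 4 * u + 3)%N; last by lia.
move=> ha hA hT.
have -> : ((4 * u.+1 + 2) * (4 * u.+1 + 8) * (A + T) =
   (4 * u.+1 + 8) * ((4 * u.+1 + 2) * A) + 4 * (4 * u.+1 + 2) * ((u.+1 + 2) * T))%N.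
  by ring.
rewrite hA hT.
have -> : (4 * (4 * u.+1 + 2) * ((4 * u + 3) * (12 * u.+1 * a)) =
   4 * (4 * u + 3) * (12 * u.+1) * ((4 * u.+1 + 2) * a))%N by ring.
by rewrite ha; ring.
Qed.

Section Moments.
Variable F : finFieldType.
Hypothesis hF : #|F| = 4%N.

Lemma sum_cap_ncodes n (C : {set 'rV[F]_n}) :
  (\sum_(D in IV_codes F n) #|C :&: D| = \sum_(x in C) ncodes_through x)%N.
Proof.
rewrite sum_IV -(double_count _ C (fun _ => 1%N)).
by apply: eq_bigr => D _; rewrite muln1.
Qed.

(* In length 0 every code is {0}. *)
Lemma sum_cap_len0 (C : {set 'rV[F]_0}) (f : nat -> nat) : typeIV C ->
  (\sum_(D in IV_codes F 0) f #|C :&: D| = f 1%N * #|IV_codes F 0|)%N.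
Proof.
move=> hC; rewrite sum_IV card_IV big_distrr /=; apply: eq_bigr => D DIV.
suff -> : C :&: D = [set 0] by rewrite cards1 muln1.
apply/setP => x; rewrite !inE (_ : x = 0); last by apply/rowP => -[].
by rewrite eqxx !(typeIV_0 hF).
Qed.

(* The codes through 0 are all codes; the codes through a nonzero codeword of
   C are counted by ncodes_through_isotropic. *)
Lemma first_moment_step k (C : {set 'rV[F]_(2 + k)}) : ~~ odd k -> typeIV C ->
  ((2 ^ (2 + k) + 2) * \sum_(D in IV_codes F (2 + k)) #|C :&: D|
     = 3 * 2 ^ (2 + k) * #|IV_codes F (2 + k)|)%N.
Proof.
move=> hk hC; have hn : ~~ odd (2 + k) by rewrite oddD.
rewrite sum_cap_ncodes (big_setD1 _ (typeIV_0 hF hC)) (ncodes_through0 hF).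
rewrite (eq_bigr (fun _ => #|IV_codes F k|)); last first.
  move=> x; rewrite !inE => /andP[x0 xC].
  exact: (ncodes_through_isotropic hF x0 (typeIV_isotropic hF hC xC)).
rewrite sum_nat_const (card_typeIV_nonzero hF hn hC) -subn1.
have := card_IV_rec hF hk; have : (1 <= 2 ^ (2 + k))%N by rewrite expn_gt0.
set t := (2 ^ (2 + k))%N; set a := #|IV_codes F k|; set b := #|IV_codes F (2 + k)|.
rewrite /=; nia.
Qed.

Lemma first_moment n (C : {set 'rV[F]_n}) : ~~ odd n -> typeIV C ->
  ((2 ^ n + 2) * \sum_(D in IV_codes F n) #|C :&: D| = 3 * 2 ^ n * #|IV_codes F n|)%N.
Proof.
case: n C => [|[//|k]] C hn hC; first by rewrite (sum_cap_len0 id hC) mul1n.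
by apply: first_moment_step; rewrite //= negbK in hn.
Qed.

(* Moving a nonzero codeword x of C to ones2, the codes through x correspond
   to the Type IV codes X of length k, and C meets each of them in
   4 |Y :&: X| codewords, for the restriction Y of the moved copy of C. *)
Lemma sum_cap_through k (C : {set 'rV[F]_(2 + k)}) x :
  typeIV C -> x \in C -> x != 0 ->
  exists2 Y : {set 'rV[F]_k}, typeIV Y &
    (\sum_(D | typeIV D && (x \in D)) #|C :&: D|
       = 4 * \sum_(X in IV_codes F k) #|Y :&: X|)%N.
Proof.
move=> hC xC x0; have [g gi [gx gCIV ogC]] := move_to_ones2 hF hC xC x0.
exists (rsubmx @: (g @: C)); first exact: typeIV_restrict.
have ginj := iso_inj gi.
have -> : (\sum_(D | typeIV D && (x \in D)) #|C :&: D| =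
           \sum_(D | typeIV D && (x \in D)) #|g @: C :&: g @: D|)%N.
  by apply: eq_bigr => D _; rewrite -imsetI ?card_imset // => u v _ _; apply: ginj.
rewrite -(sum_codes_through_iso hF x (fun D => #|g @: C :&: D|) gi) gx.
rewrite (sum_codes_through_ones2 hF (fun D => #|g @: C :&: D|)) sum_IV big_distrr.
apply: eq_bigr => X _ /=.
by rewrite {1}(lift_restrict hF gCIV ogC) lift_codeI (card_lift_code hF).
Qed.

(* |C :&: D|^2 counts the pairs (x, D) with x in C :&: D weighted by
   |C :&: D|; the pairs with x = 0 give the first moment. *)
Lemma sum_cap_sq n (C : {set 'rV[F]_n}) : typeIV C ->
  (\sum_(D in IV_codes F n) #|C :&: D| ^ 2 =
   \sum_(D in IV_codes F n) #|C :&: D|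
   + \sum_(x in C :\ 0%R) \sum_(D | typeIV D && (x \in D)) #|C :&: D|)%N.
Proof.
move=> hC; rewrite !sum_IV (eq_bigr (fun D => #|C :&: D| * #|C :&: D|)%N); last first.
  by move=> D _; rewrite mulnn.
rewrite double_count (big_setD1 _ (typeIV_0 hF hC)) /=; congr (_ + _)%N.
by apply: eq_bigl => D; case: (boolP (typeIV D)) => //= /(typeIV_0 hF).
Qed.

(* The second moment in length 2 + k, from the first moments in lengths
   2 + k and k. *)
Lemma second_moment_step k (C : {set 'rV[F]_(2 + k)}) : ~~ odd k -> typeIV C ->
  ((2 ^ (2 + k) + 2) * (2 ^ (2 + k) + 8) * \sum_(D in IV_codes F (2 + k)) #|C :&: D| ^ 2
     = 27 * (2 ^ (2 + k)) ^ 2 * #|IV_codes F (2 + k)|)%N.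
Proof.
move=> hk hC; have hn : ~~ odd (2 + k) by rewrite oddD.
have hI := card_IV_rec hF hk; have hA := first_moment_step hk hC.
rewrite (sum_cap_sq hC) expnD in hI hA *.
apply: (@second_moment_arith _ #|IV_codes F k|) => //; first by rewrite expn_gt0.
rewrite big_distrr /= (eq_bigr (fun _ => 4 * (3 * 2 ^ k * #|IV_codes F k|))%N); last first.
  move=> x; rewrite !inE => /andP[x0 xC]; have [Y YIV ->] := sum_cap_through hC xC x0.
  by rewrite mulnCA -(first_moment hk YIV) sum_IV.
rewrite sum_nat_const (card_typeIV_nonzero hF hn hC) expnD -subn1.
by congr (_ * _)%N; ring.
Qed.

Lemma second_moment n (C : {set 'rV[F]_n}) : ~~ odd n -> typeIV C ->
  ((2 ^ n + 2) * (2 ^ n + 8) * \sum_(D in IV_codes F n) #|C :&: D| ^ 2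
     = 27 * (2 ^ n) ^ 2 * #|IV_codes F n|)%N.
Proof.
case: n C => [|[//|k]] C hn hC; first by rewrite (sum_cap_len0 (fun m => m ^ 2)%N hC); lia.
by apply: second_moment_step; rewrite //= negbK in hn.
Qed.

End Moments.

Lemma ratio_nat (A I c d : nat) : (0 < I)%N -> (0 < d)%N -> (d * A = c * I)%N ->
  (A%:R / I%:R : rat) = c%:R / d%:R.
Proof.
move=> I0 d0 /(congr1 (fun m => m%:R : rat)); rewrite !natrM => e.
by apply/eqP; rewrite eqr_div ?pnatr_eq0 -?lt0n // mulrC e.
Qed.

Unset Implicit Arguments.

Theorem theorem5p6 (F : finFieldType) (hF : #|F| = 4%N) (n : nat)
    (hn : ~~ odd n) (C : {set 'rV[F]_n}) (hC : typeIV C) :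
  (\sum_(D in IV_codes F n) (#|C :&: D|%:R : rat)) / (#|IV_codes F n|%:R)
    = 3 - 3 / ((2 : rat) ^ (n%:Z - 1) + 1)
  /\
  (\sum_(D in IV_codes F n) ((#|C :&: D| ^ 2)%N%:R : rat)) / (#|IV_codes F n|%:R)
    = 27 * ((2 : rat) ^+ n) ^+ 2 / (((2 : rat) ^+ n + 2) * ((2 : rat) ^+ n + 8)).
Proof.
have I0 : (0 < #|IV_codes F n|)%N by apply/card_gt0P; exists C; rewrite inE.
have t0 : (0 < 2 ^ n)%N by rewrite expn_gt0.
rewrite -!natr_sum (ratio_nat I0 _ (first_moment hF hn hC)) ?addn_gt0 ?t0 //.
rewrite (ratio_nat I0 _ (second_moment hF hn hC)) ?muln_gt0 ?addn_gt0 ?t0 //.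
rewrite !natrM !natrD !natrX; split => //.
rewrite expfzDr // exprN1; set t := (2 : rat) ^+ n.
have tpos : 0 < t by rewrite exprn_gt0.
rewrite -[(2 : rat) ^ n]/t.
by field; rewrite !lt0r_neq0 // ?addr_gt0 ?divr_gt0.
Qed.
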